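(* Let $f=\frac1n\sum_{i=1}^n f_i$ where each $f_i:\mathbb{R}^d\to\mathbb{R}$ is $L$-smooth, and assume moreover that either each $f_i$ is $\mu$-strongly convex for some $\mu>0$, or $\inf_x f(x)>-\infty$. Let the stepsize satisfy $\gamma\le\frac1{L(n+1)}$. Then the iterates of No Full Grad SARAH (described in the context) satisfy, for every epoch $s$, $$f(x_{s+1}^0)\le f(x_s^0)-\frac{\gamma(n+1)}{2}\|\nabla f(x_s^0)\|^2+\frac{\gamma(n+1)}{2}\Big\|\nabla f(x_s^0)-\frac1{n+1}\sum_{t=0}^{n}v_s^t\Big\|^2.$$
   Context: No Full Grad SARAH: input $x_0^0\in\mathbb{R}^d$, $v_0=0$, stepsize $\gamma>0$. For epochs $s=0,1,\dots$: choose a permutation $\pi_s^1,\dots,\pi_s^n$ of $\{1,\dots,n\}$ (by any shuffling rule); set $\tilde v_s^1=0$, $v_s^0=v_s$, $x_s^1=x_s^0-\gamma v_s^0$; for $t=1,\dots,n$ set $\tilde v_s^{t+1}=\frac{t-1}{t}\tilde v_s^t+\frac1t\nabla f_{\pi_s^t}(x_s^t)$, $v_s^t=\frac1n\big(\nabla f_{\pi_s^t}(x_s^t)-\nabla f_{\pi_s^t}(x_s^{t-1})\big)+v_s^{t-1}$, $x_s^{t+1}=x_s^t-\gamma v_s^t$; then $x_{s+1}^0=x_s^{n+1}$, $v_{s+1}=\tilde v_s^{n+1}$. *)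

From HB Require Import structures.
From mathcomp Require Import all_boot all_order all_algebra all_fingroup.
From mathcomp Require Import all_classical all_reals all_analysis.
Set Implicit Arguments. Unset Strict Implicit. Unset Printing Implicit Defensive.
Import Order.TTheory GRing.Theory Num.Theory.
Import numFieldNormedType.Exports.
Local Open Scope ring_scope.

Section NFGS.
Context {R : realType} {d : nat}.
Local Notation vec := 'rV[R]_d.

Definition dotv (u v : vec) : R := (u *m v^T) 0 0.
Definition norm2 (u : vec) : R := Num.sqrt (dotv u u).

Definition grad (f : vec -> R) (x : vec) : vec :=
  \row_j ('d f x (delta_mx 0 j : vec)).

Definition L_smooth (L : R) (f : vec -> R) : Prop :=
  (forall x, differentiable f x) /\
  (forall x y, norm2 (grad f x - grad f y) <= L * norm2 (x - y)).

Definition strongly_convex (mu : R) (f : vec -> R) : Prop :=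
  forall x y, f x + dotv (grad f x) (y - x) + mu / 2 * norm2 (y - x) ^+ 2 <= f y.

Definition avgf (n : nat) (fs : 'I_n -> vec -> R) (x : vec) : R :=
  n%:R^-1 * \sum_(i < n) fs i x.

(* gradient of f_{pi^{t'+1}} at x, where the permutation is applied to
   the 0-based position t' (t' < n in all uses). *)
Definition grad_pos (n : nat) (fs : 'I_n -> vec -> R) (p : {perm 'I_n})
    (t' : nat) (x : vec) : vec :=
  match (insub t' : option 'I_n) with
  | Some i => grad (fs (p i)) x
  | None => 0
  end.

(* Inner loop of one epoch, started from x_s^0 = x0 and v_s = vs.
   inner t = (x_s^t, x_s^{t+1}, v_s^t, tilde v_s^{t+1})  for 0 <= t <= n. *)
Fixpoint inner (n : nat) (fs : 'I_n -> vec -> R) (gamma : R)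
    (p : {perm 'I_n}) (x0 vs : vec) (t : nat) : vec * vec * vec * vec :=
  match t with
  | 0 => (x0, x0 - gamma *: vs, vs, 0)
  | t'.+1 =>
      let '(xp, xc, v, tv) := inner fs gamma p x0 vs t' in
      (* current index t = t'.+1 ; xp = x^{t-1}, xc = x^t, v = v^{t-1}, tv = tilde v^t *)
      let tv' := ((t'%:R) / (t'.+1)%:R) *: tv
                 + (t'.+1)%:R^-1 *: grad_pos fs p t' xc in
      let v' := n%:R^-1 *: (grad_pos fs p t' xc - grad_pos fs p t' xp) + v in
      (xc, xc - gamma *: v', v', tv')
  end.

Definition inner_x (n : nat) fs gamma p x0 vs t : vec :=
  (@inner n fs gamma p x0 vs t).1.1.1.
Definition inner_v (n : nat) fs gamma p x0 vs t : vec :=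
  (@inner n fs gamma p x0 vs t).1.2.

(* Outer loop: outer s = (x_s^0, v_s), with v_0 = 0,
   x_{s+1}^0 = x_s^{n+1}, v_{s+1} = tilde v_s^{n+1}. *)
Fixpoint outer (n : nat) (fs : 'I_n -> vec -> R) (gamma : R)
    (pi : nat -> {perm 'I_n}) (x00 : vec) (s : nat) : vec * vec :=
  match s with
  | 0 => (x00, 0)
  | s'.+1 =>
      let '(x, vs) := outer fs gamma pi x00 s' in
      let '(_, xn1, _, tvn1) := inner fs gamma (pi s') x vs n in
      (xn1, tvn1)
  end.

Definition nfg_x0 (n : nat) fs gamma pi x00 s : vec :=
  (@outer n fs gamma pi x00 s).1.
Definition nfg_v (n : nat) fs gamma pi x00 s t : vec :=
  let '(x, vs) := @outer n fs gamma pi x00 s in inner_v fs gamma (pi s) x vs t.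

End NFGS.

From HB Require Import structures.
From mathcomp Require Import all_boot all_order all_algebra all_fingroup.
From mathcomp Require Import all_classical all_reals all_analysis.
From mathcomp Require Import ring lra.
Import Order.TTheory GRing.Theory Num.Theory.
Import numFieldNormedType.Exports.
Local Open Scope ring_scope.

(* An epoch moves x = x_s^0 to x - gamma (v_s^0 + ... + v_s^n) = x - gamma (n+1) m,
   where m is the mean of the v_s^t.  The descent lemma for the L-smooth
   average f gives
     f(x_{s+1}^0) <= f(x) - gamma (n+1) <grad f(x), m> + L gamma^2 (n+1)^2 / 2 |m|^2,
   and the polarization -2 <g, m> = |g - m|^2 - |g|^2 - |m|^2 turns this into
   the claim up to the term (L gamma (n+1) - 1) gamma (n+1) / 2 |m|^2, which the
   stepsize condition makes nonpositive. *)

Section Euclidean.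
Set Implicit Arguments.
Context {R : realType} {d : nat}.
Local Notation vec := 'rV[R]_d.

Lemma dotvE (u v : vec) : dotv u v = \sum_j u 0 j * v 0 j.
Proof. by rewrite /dotv !mxE; apply: eq_bigr => j _; rewrite mxE. Qed.

Lemma dotvC (u v : vec) : dotv u v = dotv v u.
Proof. by rewrite !dotvE; apply: eq_bigr => j _; rewrite mulrC. Qed.

Lemma dotvDl (u v w : vec) : dotv (u + v) w = dotv u w + dotv v w.
Proof. by rewrite !dotvE -big_split; apply: eq_bigr => j _; rewrite mxE mulrDl. Qed.

Lemma dotvZl (k : R) (u w : vec) : dotv (k *: u) w = k * dotv u w.
Proof. by rewrite !dotvE mulr_sumr; apply: eq_bigr => j _; rewrite mxE mulrA. Qed.

Lemma dotvBl (u v w : vec) : dotv (u - v) w = dotv u w - dotv v w.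
Proof. by rewrite dotvDl -scaleN1r dotvZl mulN1r. Qed.

Lemma dotvDr (u v w : vec) : dotv w (u + v) = dotv w u + dotv w v.
Proof. by rewrite !(dotvC w) dotvDl. Qed.

Lemma dotvZr (k : R) (u w : vec) : dotv w (k *: u) = k * dotv w u.
Proof. by rewrite !(dotvC w) dotvZl. Qed.

Lemma dotvBr (u v w : vec) : dotv w (u - v) = dotv w u - dotv w v.
Proof. by rewrite !(dotvC w) dotvBl. Qed.

Lemma dotv0l (w : vec) : dotv 0 w = 0.
Proof. by rewrite dotvE big1 // => j _; rewrite mxE mul0r. Qed.

Lemma dotvv_ge0 (u : vec) : 0 <= dotv u u.
Proof. by rewrite dotvE sumr_ge0 // => j _; rewrite -expr2 sqr_ge0. Qed.

Lemma dotvv_eq0 (w : vec) : dotv w w = 0 -> w = 0.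
Proof.
rewrite dotvE => /eqP; rewrite psumr_eq0 => [/allP w0|j _]; last first.
  by rewrite -expr2 sqr_ge0.
apply/rowP => j; rewrite mxE.
by have := w0 j (mem_index_enum j); rewrite -expr2 sqrf_eq0 => /eqP.
Qed.

Lemma dotv_sqr_le (u w : vec) : dotv u w ^+ 2 <= dotv u u * dotv w w.
Proof.
have [/dotvv_eq0 ->|w_neq0] := eqVneq (dotv w w) 0.
  by rewrite dotvC !dotv0l expr0n mulr0.
have w_gt0 : 0 < dotv w w by rewrite lt0r w_neq0 dotvv_ge0.
(* |C u - B w|^2 = C (A C - B^2) with A = <u,u>, B = <u,w>, C = <w,w> *)
have := dotvv_ge0 (dotv w w *: u - dotv u w *: w).
rewrite !(dotvBl, dotvBr, dotvZl, dotvZr) (dotvC w u); nra.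
Qed.

Lemma norm2_ge0 (u : vec) : 0 <= norm2 u.
Proof. exact: sqrtr_ge0. Qed.

Lemma norm2_sqr (u : vec) : norm2 u ^+ 2 = dotv u u.
Proof. by rewrite /norm2 sqr_sqrtr // dotvv_ge0. Qed.

Lemma norm2_0 : norm2 (0 : vec) = 0.
Proof. by rewrite /norm2 dotv0l sqrtr0. Qed.

Lemma norm2Z (k : R) (u : vec) : norm2 (k *: u) = `|k| * norm2 u.
Proof.
by rewrite /norm2 dotvZl dotvZr mulrA -expr2 sqrtrM ?sqr_ge0 // sqrtr_sqr.
Qed.

Lemma dotv_le_norm2 (u w : vec) : dotv u w <= norm2 u * norm2 w.
Proof.
apply: le_trans (ler_norm _) _.
rewrite /norm2 -sqrtrM ?dotvv_ge0 // -sqrtr_sqr ler_sqrt ?dotv_sqr_le //.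
by rewrite mulr_ge0 ?dotvv_ge0.
Qed.

Lemma ler_norm2D (u v : vec) : norm2 (u + v) <= norm2 u + norm2 v.
Proof.
have uv_ge0 : 0 <= norm2 u + norm2 v by rewrite addr_ge0 ?norm2_ge0.
rewrite {1}/norm2 -(ger0_norm uv_ge0) -sqrtr_sqr ler_sqrt ?sqr_ge0 //.
rewrite !(dotvDl, dotvDr) (dotvC v u) sqrrD -!norm2_sqr.
have := dotv_le_norm2 u v; lra.
Qed.

Lemma ler_norm2_sum n (F : 'I_n -> vec) :
  norm2 (\sum_(i < n) F i) <= \sum_(i < n) norm2 (F i).
Proof.
elim/big_ind2: _ => [|a b c e ab ce|//]; first by rewrite norm2_0.
exact: le_trans (ler_norm2D _ _) (lerD ab ce).
Qed.

End Euclidean.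

Section Smooth.
Set Implicit Arguments.
Context {R : realType} {d : nat}.
Local Notation vec := 'rV[R]_d.
Local Open Scope classical_set_scope.

Lemma diff_gradE (f : vec -> R) x v : 'd f x v = dotv (grad f x) v.
Proof.
rewrite {1}(row_sum_delta v) linear_sum dotvC dotvE.
by apply: eq_bigr => j _; rewrite linearZ /= /grad mxE.
Qed.

Lemma avgfE n (fs : 'I_n -> vec -> R) : avgf fs = n%:R^-1 *: \sum_(i < n) fs i.
Proof. by apply: funext => y; rewrite /avgf /= fct_sumE. Qed.

Lemma grad_avgf n (fs : 'I_n -> vec -> R) x :
  (forall i, differentiable (fs i) x) ->
  grad (avgf fs) x = n%:R^-1 *: \sum_(i < n) grad (fs i) x.
Proof.
move=> dfs; have dsum := differentiable_sum dfs.
apply/rowP => j; rewrite /grad avgfE !mxE diffZ //= -deriveE //.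
rewrite derive_sum => [|i]; last exact: diff_derivable.
rewrite summxE; congr (_ * _); apply: eq_bigr => i _.
by rewrite mxE deriveE.
Qed.

Lemma avgf_L_smooth n (fs : 'I_n -> vec -> R) L : (0 < n)%N ->
  (forall i, L_smooth L (fs i)) -> L_smooth L (avgf fs).
Proof.
move=> n_gt0 fs_smooth.
have dfs i x : differentiable (fs i) x by case: (fs_smooth i).
split=> [x|x y].
  by rewrite avgfE; apply: differentiableZ; exact: differentiable_sum.
have n_gt0' : 0 < n%:R :> R by rewrite ltr0n.
rewrite !grad_avgf // -scalerBr -sumrB norm2Z gtr0_norm ?invr_gt0 //.
rewrite ler_pdivrMl // mulr_natl -[n in _ *+ n]card_ord -sumr_const.
apply: le_trans (ler_norm2_sum _) (ler_sum _ _) => i _.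
by case: (fs_smooth i) => _ ->.
Qed.

Lemma is_derive_line (f : vec -> R) x w t :
  differentiable f (t *: w + x) ->
  is_derive t 1 (fun s : R => f (s *: w + x)) ('d f (t *: w + x) w).
Proof.
move=> df.
have quotE : (fun h : R => h^-1 *: (((fun s : R => f (s *: w + x)) \o shift t)
                  (h *: 1) - f (t *: w + x))) =
             (fun h : R => h^-1 *: ((f \o shift (t *: w + x)) (h *: w)
                  - f (t *: w + x))).
  by apply: funext => h; rewrite /= [h%:A]mulr1 scalerDl addrA.
apply: DeriveDef; first by rewrite /derivable quotE; exact: diff_derivable.
by rewrite -deriveE // /derive quotE.
Qed.

Lemma diff_line_le (f : vec -> R) L x w t : L_smooth L f -> 0 <= t ->
  'd f (t *: w + x) w <= dotv (grad f x) w + L * t * dotv w w.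
Proof.
move=> [_ grad_lip] t_ge0.
rewrite diff_gradE -lerBlDl -dotvBl -norm2_sqr.
apply: le_trans (dotv_le_norm2 _ _) _.
have := grad_lip (t *: w + x) x; rewrite addrK norm2Z ger0_norm // => lip.
by rewrite expr2 !mulrA ler_wpM2r ?norm2_ge0 // -mulrA.
Qed.

Lemma L_smooth_descent (f : vec -> R) L x w : L_smooth L f ->
  f (w + x) <= f x + dotv (grad f x) w + L / 2 * dotv w w.
Proof.
move=> f_smooth; have [df _] := f_smooth.
set B := dotv (grad f x) w; set K := L / 2 * dotv w w.
(* h is nonincreasing on [0, 1], so h 1 <= h 0 is the claim *)
pose h : R -> R := (fun s => f (s *: w + x)) - B *: id - K *: (id ^+ 2).
have h_der (t : R) : is_derive t 1 h
    ('d f (t *: w + x) w - B *: 1 - K *: ((2%:R * t ^+ 1) *: 1)).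
  have := is_derive_line (df (t *: w + x)).
  by rewrite /h => ?; apply: is_deriveB; apply: is_deriveZ.
have h_dvb (t : R) : derivable h t 1 by case: (h_der t).
have h_der_le0 t : t \in `]0, 1[%R -> derive1 h t <= 0.
  move=> t01; rewrite derive1E derive_val subr_le0 [B%:A]mulr1.
  rewrite [(_ * _)%:A]mulr1 expr1 lerBlDl.
  apply: le_trans (diff_line_le x w t f_smooth _) _; first by rewrite ltW ?(itvP t01).
  by rewrite -/B; change (K *: (2 * t)) with (K * (2 * t)); rewrite /K; lra.
have h_cont : {within `[0, 1], continuous h}.
  by apply: derivable_within_continuous => t _; exact: h_dvb.
have := @ler0_derive1_le_cc R h 0 1 (fun t _ => h_dvb t) h_der_le0 h_cont 1 0.
rewrite !in_itv /= !lexx ler01 => /(_ isT isT isT).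
rewrite /h /= !fctE scale0r scale1r add0r expr1n expr0n /= !scaler0.
rewrite [B%:A]mulr1 [K%:A]mulr1 !subr0; lra.
Qed.

Lemma L_smooth_step_le (f : vec -> R) L gamma N x S :
  L_smooth L f -> 0 <= gamma -> 0 < N -> L * N * gamma <= 1 ->
  f (x - gamma *: S) <= f x - gamma * N / 2 * norm2 (grad f x) ^+ 2
                        + gamma * N / 2 * norm2 (grad f x - N^-1 *: S) ^+ 2.
Proof.
move=> f_smooth gamma_ge0 N_gt0 step_le.
rewrite addrC -scaleNr; apply: le_trans (L_smooth_descent _ _ f_smooth) _.
rewrite !norm2_sqr !(dotvBl, dotvBr, dotvZl, dotvZr) (dotvC S).
set G := dotv (grad f x) (grad f x); set B := dotv (grad f x) S; set C := dotv S S.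
have C_ge0 : 0 <= C by exact: dotvv_ge0.
rewrite -subr_ge0.
have -> : f x - gamma * N / 2 * G + gamma * N / 2 * (G - N^-1 * B
            - (N^-1 * B - N^-1 * (N^-1 * C)))
          - (f x + - gamma * B + L / 2 * (- gamma * (- gamma * C)))
          = gamma * C / (2 * N) * (1 - L * N * gamma).
  by field; rewrite gt_eqF.
by rewrite mulr_ge0 ?subr_ge0 // divr_ge0 ?mulr_ge0 // ltW.
Qed.

End Smooth.

Section Iterates.
Context {R : realType} {d n : nat}.
Variables (fs : 'I_n -> 'rV[R]_d -> R) (gamma : R).

Lemma inner_next_x p x0 vs t :
  (inner fs gamma p x0 vs t).1.1.2 =
  x0 - gamma *: \sum_(k < t.+1) inner_v fs gamma p x0 vs k.
Proof.
elim: t => [|t IH]; first by rewrite big_ord1.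
have -> : (inner fs gamma p x0 vs t.+1).1.1.2 =
          (inner fs gamma p x0 vs t).1.1.2 - gamma *: inner_v fs gamma p x0 vs t.+1.
  by rewrite /inner_v /=; case: (inner fs gamma p x0 vs t) => [[[]]].
by rewrite IH [in RHS]big_ord_recr scalerDr opprD addrA.
Qed.

Lemma nfg_x0S pi x00 s :
  nfg_x0 fs gamma pi x00 s.+1 =
  nfg_x0 fs gamma pi x00 s - gamma *: \sum_(t < n.+1) nfg_v fs gamma pi x00 s t.
Proof.
rewrite /nfg_x0 /nfg_v /=; case: (outer fs gamma pi x00 s) => x vs /=.
have := inner_next_x (pi s) x vs n.
by case: (inner fs gamma (pi s) x vs n) => [[[]]].
Qed.

End Iterates.

Theorem lemma8 (R : realType) (d n : nat) (fs : 'I_n -> 'rV[R]_d -> R)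
  (L gamma : R) (pi : nat -> {perm 'I_n}) (x00 : 'rV[R]_d) :
  (0 < n)%N -> 0 < L ->
  (forall i, L_smooth L (fs i)) ->
  ((exists mu : R, 0 < mu /\ forall i, strongly_convex mu (fs i)) \/
   (exists m : R, forall x, m <= avgf fs x)) ->
  0 < gamma -> gamma <= (L * (n.+1)%:R)^-1 ->
  forall s : nat,
    let f := avgf fs in
    let xs := nfg_x0 fs gamma pi x00 s in
    f (nfg_x0 fs gamma pi x00 s.+1)
      <= f xs - gamma * (n.+1)%:R / 2 * norm2 (grad f xs) ^+ 2
         + gamma * (n.+1)%:R / 2 *
           norm2 (grad f xs - (n.+1)%:R^-1 *: \sum_(t < n.+1) nfg_v fs gamma pi x00 s t) ^+ 2.
Proof.
(* The alternative (strong convexity or a lower bound on f) only matters for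
   the convergence results built on this inequality, not for one epoch. *)
move=> n_gt0 L_gt0 fs_smooth _ gamma_gt0 gamma_le s /=.
have N_gt0 : 0 < (n.+1)%:R :> R by rewrite ltr0n.
have step_le : L * (n.+1)%:R * gamma <= 1.
  by rewrite mulrC -ler_pdivlMr ?mulr_gt0 // mul1r.
rewrite nfg_x0S; apply: L_smooth_step_le (ltW gamma_gt0) N_gt0 step_le.
exact: avgf_L_smooth.
Qed.
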